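(* Let $\mathcal{S}_1,\mathcal{S}_2\in\mathfrak{P}(X)$ with $\mathcal{S}_1\prec\mathcal{S}_2$. Then $$1\le|\mathcal{P}(\mathcal{S}_2)|-|\mathcal{H}(\mathcal{S}_2)|<|\mathcal{P}(\mathcal{S}_1)|-|\mathcal{H}(\mathcal{S}_1)|\le|X|.$$ Moreover, if $(|\mathcal{P}(\mathcal{S}_1)|-|\mathcal{H}(\mathcal{S}_1)|)-(|\mathcal{P}(\mathcal{S}_2)|-|\mathcal{H}(\mathcal{S}_2)|)\ge 2$, then there exists $\mathcal{S}_3\in\mathfrak{P}(X)$ with $\mathcal{S}_1\prec\mathcal{S}_3\prec\mathcal{S}_2$.
   Context: Let $X$ be a finite non-empty set. A set pair system on $X$ is a set of ordered pairs $(S,H)$ of subsets of $X$ with $S\ne\emptyset$ and $S\cap H=\emptyset$. On set pairs, $(S_1,H_1)\le(S_2,H_2)$ iff they are equal or one of: $S_1\cup H_1\subseteq S_2$; $S_1\cup H_1\subseteq H_2$; $S_1\subsetneq S_2$ and $H_1=H_2\ne\emptyset$. For set pair systems, $\mathcal{S}_1\preceq\mathcal{S}_2$ iff (SP1) for every $(S_1,H_1)\in\mathcal{S}_1$ there is $(S_2,H_2)\in\mathcal{S}_2$ with $(S_1,H_1)\le(S_2,H_2)$, and (SP2) for every $(S_2,H_2)\in\mathcal{S}_2$ with $H_2\ne\emptyset$, if some $(S_1,H_1)\in\mathcal{S}_1$ has $H_1=H_2$ then some such $(S_1,H_1)$ satisfies $(S_1,H_1)\le(S_2,H_2)$; $\mathcal{S}_1\prec\mathcal{S}_2$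 means $\mathcal{S}_1\preceq\mathcal{S}_2$ and $\mathcal{S}_1\ne\mathcal{S}_2$. A polestar system is a set pair system $\mathcal{S}$ with (PL1) $\mathcal{P}(\mathcal{S})=\{S:(S,H)\in\mathcal{S}\}$ is a partition of $X$; (PL2) distinct $(S,H),(S',H')\in\mathcal{S}$ have $S\ne S'$; (PL3) for each $(S,H)\in\mathcal{S}$ with $H\ne\emptyset$, $(H,\emptyset)\in\mathcal{S}$ and there is exactly one $(S',H')\in\mathcal{S}$ with $(S',H')\ne(S,H)$ and $H'=H$. Also $\mathcal{H}(\mathcal{S})=\{H:(S,H)\in\mathcal{S},H\ne\emptyset\}$, and $\mathfrak{P}(X)$ is the set of polestar systems on $X$. *)

From mathcomp Require Import all_boot all_order all_algebra.
Set Implicit Arguments. Unset Strict Implicit. Unset Printing Implicit Defensive.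

(* X is modelled as a finite type T (nonemptiness is a hypothesis of the theorem). *)
Section Polestar.
Variable T : finType.

Definition setpair := ({set T} * {set T})%type.

Definition set_pair_system (SS : {set setpair}) : bool :=
  [forall p in SS, (p.1 != set0) && [disjoint p.1 & p.2]].

Definition sp_le (p q : setpair) : bool :=
  [|| p == q,
      (p.1 :|: p.2) \subset q.1,
      (p.1 :|: p.2) \subset q.2
    | [&& p.1 \proper q.1, p.2 == q.2 & q.2 != set0]].

Definition sps_le (S1 S2 : {set setpair}) : Prop :=
  (forall p, p \in S1 -> exists2 q, q \in S2 & sp_le p q) /\
  (forall q, q \in S2 -> q.2 != set0 ->
     (exists2 p, p \in S1 & p.2 = q.2) ->
     exists2 p, p \in S1 & (p.2 = q.2 /\ sp_le p q)).

Definition sps_lt (S1 S2 : {set setpair}) : Prop := sps_le S1 S2 /\ S1 <> S2.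

Definition Pof (SS : {set setpair}) : {set {set T}} := [set p.1 | p in SS].
Definition Hof (SS : {set setpair}) : {set {set T}} :=
  [set p.2 | p in SS & p.2 != set0].

Definition polestar (SS : {set setpair}) : Prop :=
  [/\ set_pair_system SS,
      partition (Pof SS) [set: T],
      (forall p q, p \in SS -> q \in SS -> p != q -> p.1 != q.1) &
      (forall p, p \in SS -> p.2 != set0 ->
         (p.2, set0) \in SS /\
         exists q, [/\ q \in SS, q != p, q.2 = p.2 &
                    forall r, r \in SS -> r != p -> r.2 = p.2 -> r = q])].

Definition pmh (SS : {set setpair}) : int := (#|Pof SS|%:Z - #|Hof SS|%:Z)%R.

End Polestar.

From mathcomp Require Import all_boot all_order all_algebra zify.

(* In a polestar system the first components partition T into blocks, and a nonempty
   second component is a hub carried by exactly two blocks, its twins; pmh counts blocks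
   minus hubs. Every strict step S1 < S2 can be refined: there is a polestar S3 with
   S1 <= S3 <= S2 and pmh S3 = pmh S1 - 1, obtained by one local move towards S2:
   merging two blocks lying in a common block of S2, collapsing two twins together with
   their hub into a single block, or, when S1 and S2 have the same blocks, installing a
   hub of S2 that S1 lacks. Iterating the refinement shows that pmh decreases strictly
   along <, and a gap of at least 2 leaves room for the refinement to be strictly between.
   The bounds hold because the hubs form a proper subset of the blocks, which partition T. *)

Set Implicit Arguments. Unset Strict Implicit. Unset Printing Implicit Defensive.

Section Polestars.
Variable T : finType.
Implicit Types (SS S : {set setpair T}) (p q r : setpair T) (A B C H : {set T}).

Lemma disjointP A B : reflect (forall x, x \in A -> x \in B -> False) [disjoint A & B].
Proof.
apply: (iffP pred0P) => [AB x xA xB | AB x /=]; first by move: (AB x); rewrite /= xA xB.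
by apply/negbTE/andP => -[] /AB.
Qed.

Record polestar_spec SS : Prop := PolestarSpec {
  ps_neq0 : forall p, p \in SS -> p.1 != set0;
  ps_disj : forall p x, p \in SS -> x \in p.1 -> x \in p.2 -> False;
  ps_cover : forall x, exists2 p, p \in SS & x \in p.1;
  ps_uniq : forall p q x, p \in SS -> q \in SS -> x \in p.1 -> x \in q.1 -> p = q;
  ps_hub : forall p, p \in SS -> p.2 != set0 -> (p.2, set0) \in SS;
  ps_twin : forall p, p \in SS -> p.2 != set0 -> exists2 q, q \in SS &
    [/\ q != p, q.2 = p.2 & forall r, r \in SS -> r.2 = p.2 -> r = p \/ r = q] }.

Lemma polestarP SS : polestar SS <-> polestar_spec SS.
Proof.
split.
- case=> /forallP sps /and3P[/eqP cov /trivIsetP triv _] inj1 hub.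
  have uniq p q x : p \in SS -> q \in SS -> x \in p.1 -> x \in q.1 -> p = q.
    move=> pS qS xp xq; apply/eqP/negPn/negP => pq.
    have /disjointP := triv _ _ (imset_f _ pS) (imset_f _ qS) (inj1 p q pS qS pq).
    by move/(_ x xp xq).
  split=> //.
  + by move=> p pS; have /implyP/(_ pS)/andP[] := sps p.
  + by move=> p x pS; have /implyP/(_ pS)/andP[_ /disjointP] := sps p; apply.
  + move=> x; have : x \in cover (Pof SS) by rewrite cov inE.
    by case/bigcupP=> _ /imsetP[p pS ->] xp; exists p.
  + by move=> p pS /(hub p pS) [].
  + move=> p pS /(hub p pS) [_ [q [qS qp q2 qu]]]; exists q => //; split=> // r rS r2.
    by case: (eqVneq r p) => [->|rp]; [left | right; apply: qu].
- case=> neq0 disj cov uniq hub twin; split.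
  + apply/forall_inP => p pS; rewrite neq0 //=.
    by apply/disjointP => x; apply: disj.
  + apply/and3P; split.
    * apply/eqP/setP => x; rewrite inE; have [p pS xp] := cov x.
      by apply/bigcupP; exists p.1 => //; apply: imset_f.
    * apply/trivIsetP => _ _ /imsetP[p pS ->] /imsetP[q qS ->] pq.
      by apply/disjointP => x xp xq; move/negP: pq; apply; rewrite (uniq p q x).
    * by apply/imsetP => -[p pS p0]; move: (neq0 p pS); rewrite -p0 eqxx.
  + move=> p q pS qS pq; apply/negP => /eqP e; move/negP: pq; apply; apply/eqP.
    by have /set0Pn[x xp] := neq0 p pS; apply: (uniq p q x) => //; rewrite -e.
  + move=> p pS p2; split; first exact: hub.
    have [q qS [qp q2 qu]] := twin p pS p2; exists q; split=> // r rS rp r2.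
    by case: (qu r rS r2) => // rp'; move/eqP: rp.
Qed.

Lemma HofP SS H : reflect (exists2 p, p \in SS & p.2 != set0 /\ H = p.2) (H \in Hof SS).
Proof.
apply: (iffP imsetP) => [[p] | [p pS [p2 ->]]].
- by rewrite inE => /andP[pS p2] ->; exists p.
- by exists p => //; rewrite inE pS.
Qed.

Lemma pair_ext p q : p.1 = q.1 -> p.2 = q.2 -> p = q.
Proof. by case: p q => [a b] [c d] /= -> ->. Qed.

Section PolestarFacts.
Variable SS : {set setpair T}.
Hypothesis hS : polestar_spec SS.

Lemma ps_disjoint p : p \in SS -> [disjoint p.1 & p.2].
Proof. by move=> pS; apply/disjointP => x; apply: (ps_disj hS pS). Qed.

Lemma ps_meet p q A : p \in SS -> q \in SS -> A != set0 ->
  A \subset p.1 -> A \subset q.1 -> p = q.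
Proof.
move=> pS qS /set0Pn[x xA] /subsetP Ap /subsetP Aq.
exact: (ps_uniq hS pS qS (Ap x xA) (Aq x xA)).
Qed.

Lemma ps_sub p q : p \in SS -> q \in SS -> p.1 \subset q.1 -> p = q.
Proof. by move=> pS qS; apply: (ps_meet pS qS (ps_neq0 hS pS)). Qed.

Lemma ps_inj1 p q : p \in SS -> q \in SS -> p.1 = q.1 -> p = q.
Proof. by move=> pS qS e; apply: ps_sub => //; rewrite e. Qed.

Lemma card_Pof : #|Pof SS| = #|SS|.
Proof. by rewrite /Pof card_in_imset // => p q pS qS; apply: ps_inj1. Qed.

Lemma ps_twins_eq A B H r : (A, H) \in SS -> (B, H) \in SS -> A != B -> H != set0 ->
  r \in SS -> r.2 = H -> r = (A, H) \/ r = (B, H).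
Proof.
move=> hA hB AB H0 rS r2; have [q _ [_ _ qu]] := ps_twin hS hA H0.
have -> : (B, H) = q by case: (qu (B, H) hB erefl) => // -[BA]; rewrite BA eqxx in AB.
exact: qu.
Qed.

End PolestarFacts.

Definition intermediate (S1 S2 S3 : {set setpair T}) : Prop :=
  [/\ polestar_spec S3, sps_le S1 S3, sps_le S3 S2 & pmh S3 = (pmh S1 - 1)%R].

Lemma pmh_eq_sub1 S1 S3 : polestar_spec S1 -> polestar_spec S3 ->
  (#|S3| + #|Hof S1|).+1 = #|S1| + #|Hof S3| -> pmh S3 = (pmh S1 - 1)%R.
Proof.
move=> h1 h3; rewrite /pmh (card_Pof h1) (card_Pof h3).
move: #|S3| #|S1| #|Hof S1| #|Hof S3| => a b c d; lia.
Qed.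

Lemma sp_le_refl p : sp_le p p.
Proof. by rewrite /sp_le eqxx. Qed.

Lemma sp_le_sub1 A C H : A \subset C -> sp_le (A, H) (C, H).
Proof.
move=> AC; rewrite /sp_le /=.
have [->|H0] := eqVneq H set0; first by rewrite setU0 AC orbT.
have [->|AneC] := eqVneq A C; first by rewrite eqxx.
by rewrite properEneq AneC AC eqxx !orbT.
Qed.

Lemma sp_le_same2_sub1 p q : p.1 != set0 -> [disjoint p.1 & p.2] ->
  [disjoint q.1 & q.2] -> p.2 = q.2 -> q.2 != set0 -> sp_le p q -> p.1 \subset q.1.
Proof.
move=> p1 /disjointP dp /disjointP dq e q2 /or4P[/eqP->//| | |].
- rewrite subUset => /andP[_ /subsetP sub]; case/set0Pn: q2 => x xq.
  by case: (dq x (sub x _) xq); rewrite e.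
- rewrite subUset => /andP[/subsetP sub _]; case/set0Pn: p1 => x xp.
  by case: (dp x xp); rewrite e; apply: sub.
- by case/and3P => /proper_sub.
Qed.

Section SpsLe.
Variables S1 S2 : {set setpair T}.
Hypotheses (h1 : polestar_spec S1) (h2 : polestar_spec S2) (le12 : sps_le S1 S2).

Lemma sps_le_cover p : p \in S1 -> exists2 r, r \in S2 & p.1 \subset r.1.
Proof.
move=> pS; have [q qS /or4P[/eqP pq| | |]] := le12.1 p pS.
- by exists q; rewrite // -pq.
- by move=> /subUsetP[pq _]; exists q.
- move=> /subUsetP[pq _]; exists (q.2, set0) => //.
  exact/(ps_hub h2 qS)/(subset_neq0 pq)/(ps_neq0 h1 pS).
- by case/and3P => /proper_sub pq _ _; exists q.
Qed.

Lemma sps_le_hubbed p : p \in S1 -> p.2 != set0 ->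
  (exists2 r, r \in S2 & p.1 :|: p.2 \subset r.1) \/
  ((p.2, set0) \in S2 /\ exists2 r, r \in S2 & r.2 = p.2 /\ p.1 \subset r.1).
Proof.
move=> pS p2; have [q qS /or4P[/eqP pq| | |]] := le12.1 p pS.
- by right; rewrite pq in p2 *; split; [exact: (ps_hub h2 qS p2) | exists q].
- by move=> pq; left; exists q.
- move=> pq; left; exists (q.2, set0) => //; apply: (ps_hub h2 qS).
  by apply: subset_neq0 pq _; apply: subset_neq0 (subsetUl _ _) (ps_neq0 h1 pS).
- case/and3P => /proper_sub pq /eqP e q2; right.
  by rewrite e; split; [exact: (ps_hub h2 qS q2) | exists q].
Qed.

Lemma hubbed_block_not_hub C h : (C, h) \in S2 -> h != set0 -> forall s, s \in S1 -> s.2 != C.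
Proof.
move=> CS h0 s sS; apply/eqP => sC; have s2 : s.2 != set0 by rewrite sC (ps_neq0 h2 CS).
case: (sps_le_hubbed sS s2) => [[t tS st] | [CS' _]].
- have Ct : C \subset t.1 by rewrite -sC; apply: subset_trans st; apply: subsetUr.
  have tC := ps_meet h2 tS CS (ps_neq0 h2 CS) Ct (subxx C).
  have /set0Pn[y ys] := ps_neq0 h1 sS.
  have yt : y \in t.1 by apply: (subsetP st); rewrite inE ys.
  by apply: (ps_disj h1 sS ys); rewrite sC; move: yt; rewrite tC.
- rewrite sC in CS'; case: (ps_inj1 h2 CS CS' erefl) => h_eq0.
  by rewrite h_eq0 eqxx in h0.
Qed.

Lemma sps_le_twins r : r \in S2 -> r.2 != set0 -> (exists2 p, p \in S1 & p.2 = r.2) ->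
  exists2 p, p \in S1 & p.2 = r.2 /\ p.1 \subset r.1.
Proof.
move=> rS r2 ex; have [p pS [e pr]] := le12.2 r rS r2 ex.
exists p => //; split=> //; apply: sp_le_same2_sub1 pr => //.
- exact: (ps_neq0 h1 pS).
- exact: (ps_disjoint h1 pS).
- exact: (ps_disjoint h2 rS).
Qed.

End SpsLe.

Lemma twin_transport (S1 S3 : {set setpair T}) (psi phi : setpair T -> setpair T) :
  polestar_spec S1 ->
  (forall r, r \in S3 -> psi r \in S1 /\ (psi r).2 = r.2) ->
  {in S3 &, injective psi} ->
  (forall q p, q \in S1 -> p \in S3 -> p.2 != set0 -> q.2 = p.2 ->
     phi q \in S3 /\ psi (phi q) = q) ->
  forall p, p \in S3 -> p.2 != set0 -> exists2 q, q \in S3 &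
    [/\ q != p, q.2 = p.2 & forall r, r \in S3 -> r.2 = p.2 -> r = p \/ r = q].
Proof.
move=> h1 hpsi inj hphi p pS p2; have [ppS ppsi2] := hpsi p pS.
have pp2 : (psi p).2 != set0 by rewrite ppsi2.
have [q qS [qp q2 qu]] := ps_twin h1 ppS pp2.
have [phS phK] := hphi q p qS pS p2 (etrans q2 ppsi2).
exists (phi q) => //; split.
- by apply: contra_neq qp => e; rewrite -phK e.
- by have [_ <-] := hpsi _ phS; rewrite phK q2 ppsi2.
- move=> r rS r2; have [rpS rpsi2] := hpsi r rS.
  case: (qu (psi r) rpS (etrans rpsi2 (etrans r2 (esym ppsi2)))) => e.
  + by left; apply: inj.
  + by right; apply: inj => //; rewrite phK.
Qed.

Section Merge.
Variables (S1 : {set setpair T}) (X Y h : {set T}).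
Hypotheses (h1 : polestar_spec S1) (hX : (X, h) \in S1) (hY : (Y, set0) \in S1)
  (XY : X != Y) (nX : forall p, p \in S1 -> p.2 != X) (nY : forall p, p \in S1 -> p.2 != Y).

Definition merge_blocks := (X :|: Y, h) |: (S1 :\ (X, h) :\ (Y, set0)).
Local Notation merged := (X :|: Y, h).
Local Notation old r := [&& r != (Y, set0), r != (X, h) & r \in S1].

Lemma merge_mem r : (r \in merge_blocks) = (r == merged) || old r.
Proof. by rewrite !inE. Qed.

Lemma merged_notin : merged \notin S1.
Proof.
apply/negP => mS; case: (ps_sub h1 hX mS (subsetUl X Y)) => eX.
by case: (ps_sub h1 hY mS (subsetUr X Y)) => eY; move: XY; rewrite (etrans eX (esym eY)) eqxx.
Qed.

Lemma merge_old r : old r -> (r == merged) = false.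
Proof. by case/and3P=> _ _ rS; apply: contraNF merged_notin => /eqP <-. Qed.

Lemma merge_polestar : polestar_spec merge_blocks.
Proof.
split.
- move=> p; rewrite merge_mem => /orP[/eqP->|/and3P[_ _ pS]]; last exact: (ps_neq0 h1 pS).
  exact: subset_neq0 (subsetUl X Y) (ps_neq0 h1 hX).
- move=> p x; rewrite merge_mem => /orP[/eqP->|/and3P[_ _ pS]]; last exact: (ps_disj h1 pS).
  rewrite /= inE => /orP[xX xh|xY xh]; first exact: (ps_disj h1 hX xX xh).
  have h0 : h != set0 by apply/set0Pn; exists x.
  by case: (ps_uniq h1 hY (ps_hub h1 hX h0) xY xh) => hY'; move: (nY hX); rewrite hY' eqxx.
- move=> x; have [p pS xp] := ps_cover h1 x.
  have [pX|pnX] := eqVneq p (X, h).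
    by move: xp; rewrite pX /= => xp; exists merged; rewrite ?merge_mem ?eqxx //= inE xp.
  have [pY|pnY] := eqVneq p (Y, set0).
    by move: xp; rewrite pY /= => xp; exists merged; rewrite ?merge_mem ?eqxx //= inE xp orbT.
  by exists p => //; rewrite merge_mem pnX pnY pS orbT.
- have apart r x : old r -> x \in r.1 -> x \in merged.1 -> False.
    move=> /and3P[rnY rnX rS] xr; rewrite /= inE => /orP[xX|xY].
    + by move/eqP: rnX; apply; apply: (ps_uniq h1 rS hX xr xX).
    + by move/eqP: rnY; apply; apply: (ps_uniq h1 rS hY xr xY).
  move=> p q x; rewrite !merge_mem => /orP[/eqP->|pS] /orP[/eqP->|qS] xp xq //.
  + by case: (apart q x qS xq xp).
  + by case: (apart p x pS xp xq).
  + by case/and3P: pS => _ _ pS; case/and3P: qS => _ _ qS; apply: (ps_uniq h1 pS qS xp xq).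
- have hub_old p : p \in S1 -> p.2 != set0 -> (p.2, set0) \in merge_blocks.
    move=> pS p2; rewrite merge_mem (ps_hub h1 pS p2) andbT !xpair_eqE.
    by rewrite (negbTE (nX pS)) (negbTE (nY pS)) orbT.
  move=> p; rewrite merge_mem => /orP[/eqP->|/and3P[_ _ pS]]; [exact: hub_old hX | exact: hub_old].
- apply: (twin_transport (psi := fun r => if r == merged then (X, h) else r)
                        (phi := fun q => if q == (X, h) then merged else q) h1).
  + move=> r; rewrite merge_mem => /orP[/eqP->|rold]; first by rewrite eqxx.
    by rewrite merge_old //; case/and3P: rold.
  + move=> r r'; rewrite !merge_mem => /orP[/eqP->|rold] /orP[/eqP->|r'old] //;
      rewrite ?eqxx ?merge_old // => e.
    * by move: r'old; rewrite -e eqxx andbF.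
    * by move: rold; rewrite e eqxx andbF.
  + move=> q p qS pS p2 qp2; have [->|qnX] := eqVneq q (X, h); first by rewrite eqxx merge_mem eqxx.
    have qnY : q != (Y, set0) by apply: contra_neq p2 => qY; rewrite -qp2 qY.
    have qold : old q by rewrite qnY qnX qS.
    by rewrite merge_old // merge_mem qold orbT.
Qed.

Lemma sps_le_merge : sps_le S1 merge_blocks.
Proof.
split.
- move=> p pS; have [->|pnX] := eqVneq p (X, h).
    by exists merged; rewrite ?merge_mem ?eqxx // sp_le_sub1 ?subsetUl.
  have [->|pnY] := eqVneq p (Y, set0).
    by exists merged; rewrite ?merge_mem ?eqxx // /sp_le /= setU0 subsetUr orbT.
  by exists p; [rewrite merge_mem pnX pnY pS orbT | exact: sp_le_refl].
- move=> q; rewrite merge_mem => /orP[/eqP->|/and3P[_ _ qS]] q2 _.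
  + by exists (X, h) => //; split=> //; rewrite sp_le_sub1 ?subsetUl.
  + by exists q => //; split=> //; exact: sp_le_refl.
Qed.

Lemma Hof_merge : Hof merge_blocks = Hof S1.
Proof.
apply/setP => H; apply/HofP/HofP => [[p]|[p pS [p2 ->]]].
- by rewrite merge_mem => /orP[/eqP->|/and3P[_ _ pS]] [p2 ->]; [exists (X, h) | exists p].
- have [pX|pnX] := eqVneq p (X, h).
    by exists merged; rewrite ?merge_mem ?eqxx // pX; move: p2; rewrite pX.
  have pnY : p != (Y, set0) by apply: contra_neq p2 => ->.
  by exists p; rewrite ?merge_mem ?pnX ?pnY ?pS ?orbT.
Qed.

Lemma card_merge : #|merge_blocks|.+1 = #|S1|.
Proof.
rewrite cardsU1 (cardsD1 (X, h) S1) hX (cardsD1 (Y, set0) (S1 :\ (X, h))).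
have -> : (Y, set0) \in S1 :\ (X, h).
  by rewrite !inE hY andbT xpair_eqE eq_sym (negbTE XY).
by rewrite !inE (negbTE merged_notin) !andbF.
Qed.

Lemma pmh_merge : pmh merge_blocks = (pmh S1 - 1)%R.
Proof. by apply: (pmh_eq_sub1 h1 merge_polestar); rewrite Hof_merge -card_merge addSn. Qed.

Lemma merge_intermediate S2 r0 : polestar_spec S2 -> sps_le S1 S2 ->
  r0 \in S2 -> X :|: Y \subset r0.1 -> (h != set0 -> r0.2 = h) ->
  intermediate S1 S2 merge_blocks.
Proof.
move=> h2 le12 r0S XYr0 r0h.
split; [exact: merge_polestar | exact: sps_le_merge | | exact: pmh_merge].
have merged_le : sp_le merged r0.
  have [h0|h0] := eqVneq h set0; first by rewrite /sp_le /= h0 setU0 XYr0 orbT.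
  by case: r0 r0S XYr0 r0h => C D /= _ XYC /(_ h0) ->; apply: sp_le_sub1.
split.
- move=> q; rewrite merge_mem => /orP[/eqP->|/and3P[_ _ qS]]; first by exists r0.
  exact: le12.1 q qS.
- move=> r rS r2 [q qS3 qr].
  have [p pS [pr ple]] : exists2 p, p \in S1 & p.2 = r.2 /\ sp_le p r.
    apply: le12.2 => //; move: qS3; rewrite merge_mem => /orP[/eqP qm|/and3P[_ _ qS]].
    + by exists (X, h) => //; rewrite -qr qm.
    + by exists q.
  have [pX|pnX] := eqVneq p (X, h).
    have Xr : X \subset r.1.
      have := sp_le_same2_sub1 (ps_neq0 h1 pS) (ps_disjoint h1 pS) (ps_disjoint h2 rS) pr r2 ple.
      by rewrite pX.
    have rr0 : r = r0.
      by apply: (ps_meet h2 rS r0S (ps_neq0 h1 hX) Xr); apply: subset_trans XYr0; apply: subsetUl.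
    by exists merged; [rewrite merge_mem eqxx | rewrite /= -pr pX rr0].
  have pnY : p != (Y, set0) by apply: contra_neq r2 => pY; rewrite -pr pY.
  by exists p => //; rewrite merge_mem pnX pnY pS orbT.
Qed.

End Merge.

Section Collapse.
Variables (S1 : {set setpair T}) (A B H : {set T}).
Hypotheses (h1 : polestar_spec S1) (hH : (H, set0) \in S1) (hA : (A, H) \in S1)
  (hB : (B, H) \in S1) (AB : A != B) (H0 : H != set0).

Definition collapse := (A :|: B :|: H, set0) |: (S1 :\ (A, H) :\ (B, H) :\ (H, set0)).
Local Notation collapsed := (A :|: B :|: H, @set0 T).
Local Notation old r := [&& r != (H, set0), r != (B, H), r != (A, H) & r \in S1].

Lemma collapse_mem r : (r \in collapse) = (r == collapsed) || old r.
Proof. by rewrite !inE. Qed.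

Lemma collapse_old_mem r : old r -> r \in S1.
Proof. by case/and4P. Qed.

Lemma collapse_apart r x : old r -> x \in r.1 -> x \in collapsed.1 -> False.
Proof.
move=> /and4P[rnH rnB rnA rS] xr; rewrite /= !inE => /orP[/orP[xA|xB]|xH].
- by move/eqP: rnA; apply; apply: (ps_uniq h1 rS hA xr xA).
- by move/eqP: rnB; apply; apply: (ps_uniq h1 rS hB xr xB).
- by move/eqP: rnH; apply; apply: (ps_uniq h1 rS hH xr xH).
Qed.

Lemma collapsed_notin : collapsed \notin S1.
Proof.
apply/negP => cS; have [_ H_eq0] : (A, H) = collapsed.
  by apply: (ps_sub h1 hA cS); rewrite /= -setUA subsetUl.
by move: H0; rewrite H_eq0 eqxx.
Qed.

Lemma collapse_old r : old r -> (r == collapsed) = false.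
Proof. by move/collapse_old_mem => rS; apply: contraNF collapsed_notin => /eqP <-. Qed.

Lemma collapse_old_hub r : old r -> r.2 != H.
Proof.
move=> rold; apply/eqP => /(ps_twins_eq h1 hA hB AB H0 (collapse_old_mem rold)).
by case=> rAB; move: rold; rewrite rAB eqxx ?andbF.
Qed.

Lemma collapse_oldP r : r \in S1 -> r.2 != set0 -> r.2 != H -> old r.
Proof.
move=> rS r2 rH; rewrite rS andbT.
by apply/and3P; split; apply/eqP => rE; move: r2 rH; rewrite rE eqxx.
Qed.

Lemma collapse_absorb p : p \in S1 -> ~~ old p -> p.1 :|: p.2 \subset collapsed.1.
Proof.
move=> pS pnold; have : [|| p == (H, set0), p == (B, H) | p == (A, H)].
  by apply: contraNT pnold; rewrite !negb_or pS andbT.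
case/or3P => /eqP->; apply/subsetP => y; rewrite !inE.
all: by case: (y \in A); case: (y \in B); case: (y \in H).
Qed.

Lemma collapse_polestar : polestar_spec collapse.
Proof.
split.
- move=> p; rewrite collapse_mem => /orP[/eqP->|/collapse_old_mem pS]; last exact: (ps_neq0 h1 pS).
  exact: subset_neq0 (subsetUr _ _) H0.
- move=> p x; rewrite collapse_mem => /orP[/eqP->|/collapse_old_mem pS].
    by move=> _; rewrite inE.
  exact: (ps_disj h1 pS).
- move=> x; have [p pS xp] := ps_cover h1 x.
  have [pold|pnold] := boolP (old p); first by exists p; rewrite // collapse_mem pold orbT.
  exists collapsed; first by rewrite collapse_mem eqxx.
  by apply: (subsetP (collapse_absorb pS pnold)); rewrite inE xp.
- move=> p q x; rewrite !collapse_mem => /orP[/eqP->|pold] /orP[/eqP->|qold] xp xq //.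
  + by case: (collapse_apart qold xq xp).
  + by case: (collapse_apart pold xp xq).
  + exact: (ps_uniq h1 (collapse_old_mem pold) (collapse_old_mem qold) xp xq).
- move=> p; rewrite collapse_mem => /orP[/eqP->|pold] p2; first by rewrite eqxx in p2.
  have pS := collapse_old_mem pold.
  rewrite collapse_mem (ps_hub h1 pS p2) !xpair_eqE (negbTE (collapse_old_hub pold)).
  by rewrite !(eq_sym set0 H) (negbTE H0) !andbF orbT.
- apply: (twin_transport (psi := fun r => if r == collapsed then (H, set0) else r)
                        (phi := id) h1).
  + move=> r; rewrite collapse_mem => /orP[/eqP->|rold]; first by rewrite eqxx.
    by rewrite collapse_old // collapse_old_mem.
  + move=> r r'; rewrite !collapse_mem => /orP[/eqP->|rold] /orP[/eqP->|r'old] //;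
      rewrite ?eqxx ?collapse_old // => e.
    * by move: r'old; rewrite -e eqxx.
    * by move: rold; rewrite e eqxx.
  + move=> q p qS; rewrite collapse_mem => /orP[/eqP->|pold] p2 qp2; first by rewrite eqxx in p2.
    have qold : old q by apply: collapse_oldP; rewrite ?qp2 ?collapse_old_hub.
    by rewrite collapse_mem qold orbT collapse_old.
Qed.

Lemma sps_le_collapse : sps_le S1 collapse.
Proof.
split.
- move=> p pS; have [pold|pnold] := boolP (old p).
    by exists p; [rewrite collapse_mem pold orbT | exact: sp_le_refl].
  exists collapsed; first by rewrite collapse_mem eqxx.
  by rewrite /sp_le collapse_absorb ?orbT.
- move=> q; rewrite collapse_mem => /orP[/eqP->|qold] q2 _; first by rewrite eqxx in q2.
  by exists q; [exact: collapse_old_mem | split=> //; exact: sp_le_refl].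
Qed.

Lemma Hof_collapse : Hof collapse = Hof S1 :\ H.
Proof.
apply/setP => G; rewrite inE; apply/HofP/andP => [[p]|[GH /HofP[p pS [p2 Gp]]]].
- rewrite collapse_mem => /orP[/eqP->|pold] [p2 ->]; first by rewrite eqxx in p2.
  split; first by rewrite inE collapse_old_hub.
  by apply/HofP; exists p => //; exact: collapse_old_mem.
- exists p => //; rewrite collapse_mem collapse_oldP ?orbT //.
  by rewrite -Gp -in_set1.
Qed.

Lemma card_collapse : #|collapse|.+2 = #|S1|.
Proof.
rewrite cardsU1 (cardsD1 (A, H) S1) hA (cardsD1 (B, H) (S1 :\ (A, H))).
rewrite (cardsD1 (H, set0) (S1 :\ (A, H) :\ (B, H))).
have -> : (B, H) \in S1 :\ (A, H) by rewrite !inE hB andbT xpair_eqE eq_sym (negbTE AB).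
have -> : (H, set0) \in S1 :\ (A, H) :\ (B, H).
  by rewrite !inE hH !xpair_eqE !(eq_sym set0 H) (negbTE H0) !andbF.
by rewrite !inE (negbTE collapsed_notin) !andbF.
Qed.

Lemma card_Hof_collapse : #|Hof collapse|.+1 = #|Hof S1|.
Proof.
rewrite Hof_collapse (cardsD1 H (Hof S1)).
by have -> : H \in Hof S1 by apply/HofP; exists (A, H).
Qed.

Lemma pmh_collapse : pmh collapse = (pmh S1 - 1)%R.
Proof.
apply: (pmh_eq_sub1 h1 collapse_polestar).
by rewrite -card_collapse -card_Hof_collapse addnS addSn.
Qed.

Lemma collapse_intermediate S2 r0 : sps_le S1 S2 ->
  r0 \in S2 -> A :|: B :|: H \subset r0.1 -> intermediate S1 S2 collapse.
Proof.
move=> le12 r0S ABHr0.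
split; [exact: collapse_polestar | exact: sps_le_collapse | split | exact: pmh_collapse].
- move=> q; rewrite collapse_mem => /orP[/eqP->|qold]; last exact: le12.1 q (collapse_old_mem qold).
  by exists r0 => //; rewrite /sp_le /= setU0 ABHr0 orbT.
- move=> r rS r2 [q qS qr].
  have qold : old q.
    by move: qS; rewrite collapse_mem => /orP[/eqP qc|//]; move: r2; rewrite -qr qc eqxx.
  have [p pS [pr ple]] := le12.2 r rS r2 (ex_intro2 _ _ q (collapse_old_mem qold) qr).
  have pold : old p by apply: collapse_oldP; rewrite ?pr // -qr collapse_old_hub.
  by exists p => //; rewrite collapse_mem pold orbT.
Qed.

End Collapse.

Section NewHub.
Variables (S1 : {set setpair T}) (A B H : {set T}).
Hypotheses (h1 : polestar_spec S1) (hH : (H, set0) \in S1) (hA : (A, set0) \in S1)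
  (hB : (B, set0) \in S1) (AB : A != B) (AH : A != H) (BH : B != H)
  (nH : forall p, p \in S1 -> p.2 != H) (nA : forall p, p \in S1 -> p.2 != A)
  (nB : forall p, p \in S1 -> p.2 != B).

Definition new_hub := (A, H) |: ((B, H) |: (S1 :\ (A, set0) :\ (B, set0))).
Local Notation old r := [&& r != (B, set0), r != (A, set0) & r \in S1].

Lemma new_hub_mem r : (r \in new_hub) = [|| r == (A, H), r == (B, H) | old r].
Proof. by rewrite !inE. Qed.

Lemma H_neq0 : H != set0.
Proof. exact: (ps_neq0 h1 hH). Qed.

Lemma new_hub_old_mem r : old r -> r \in S1.
Proof. by case/and3P. Qed.

Lemma new_hub_old_hub r : old r -> r.2 != H.
Proof. by move/new_hub_old_mem/nH. Qed.

Lemma new_hub_oldP r : r \in S1 -> r.2 != set0 -> old r.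
Proof.
by move=> rS r2; rewrite rS andbT; apply/andP; split; apply: contra_neq r2 => ->.
Qed.

Lemma new_hub_apart r x : old r -> x \in r.1 -> x \in A :|: B -> False.
Proof.
move=> /and3P[rnB rnA rS] xr; rewrite inE => /orP[xA|xB].
- by move/eqP: rnA; apply; apply: (ps_uniq h1 rS hA xr xA).
- by move/eqP: rnB; apply; apply: (ps_uniq h1 rS hB xr xB).
Qed.

Lemma hubbed_notin C : (C, set0) \in S1 -> (C, H) \notin S1.
Proof.
move=> CS; apply/negP => CHS; case: (ps_inj1 h1 CS CHS erefl) => H_eq0.
by move: H_neq0; rewrite -H_eq0 eqxx.
Qed.

Lemma new_hub_uniq p q x : p \in new_hub -> q \in new_hub ->
  x \in p.1 -> x \in q.1 -> p = q.
Proof.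
have AB_apart y : y \in A -> y \in B -> False.
  by move=> yA yB; case: (ps_uniq h1 hA hB yA yB) => AeB; move: AB; rewrite AeB eqxx.
rewrite !new_hub_mem => /or3P[/eqP->|/eqP->|pold] /or3P[/eqP->|/eqP->|qold] /= xp xq //.
- by case: (AB_apart x xp xq).
- by case: (new_hub_apart qold xq); rewrite inE xp.
- by case: (AB_apart x xq xp).
- by case: (new_hub_apart qold xq); rewrite inE xp orbT.
- by case: (new_hub_apart pold xp); rewrite inE xq.
- by case: (new_hub_apart pold xp); rewrite inE xq orbT.
- exact: (ps_uniq h1 (new_hub_old_mem pold) (new_hub_old_mem qold) xp xq).
Qed.

Lemma new_hub_twin p : p \in new_hub -> p.2 != set0 -> exists2 q, q \in new_hub &
  [/\ q != p, q.2 = p.2 & forall r, r \in new_hub -> r.2 = p.2 -> r = p \/ r = q].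
Proof.
rewrite new_hub_mem => /or3P[/eqP->|/eqP->|pold] /= p2.
- exists (B, H); first by rewrite new_hub_mem eqxx orbT.
  split=> //; first by rewrite xpair_eqE eq_sym (negbTE AB).
  move=> r; rewrite new_hub_mem => /or3P[/eqP->|/eqP->|rold] r2; [by left | by right |].
  by move: (new_hub_old_hub rold); rewrite r2 eqxx.
- exists (A, H); first by rewrite new_hub_mem eqxx.
  split=> //; first by rewrite xpair_eqE (negbTE AB).
  move=> r; rewrite new_hub_mem => /or3P[/eqP->|/eqP->|rold] r2; [by right | by left |].
  by move: (new_hub_old_hub rold); rewrite r2 eqxx.
- have pS := new_hub_old_mem pold; have [q qS [qp q2 qu]] := ps_twin h1 pS p2.
  have qold : old q by apply: new_hub_oldP; rewrite // q2.
  exists q; first by rewrite new_hub_mem qold !orbT.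
  split=> // r; rewrite new_hub_mem => /or3P[/eqP->|/eqP->|rold] /= r2.
  + by move: (new_hub_old_hub pold); rewrite -r2 eqxx.
  + by move: (new_hub_old_hub pold); rewrite -r2 eqxx.
  + exact: qu (new_hub_old_mem rold) r2.
Qed.

Lemma new_hub_polestar : polestar_spec new_hub.
Proof.
split.
- move=> p; rewrite new_hub_mem => /or3P[/eqP->|/eqP->|/new_hub_old_mem pS].
  + exact: (ps_neq0 h1 hA).
  + exact: (ps_neq0 h1 hB).
  + exact: (ps_neq0 h1 pS).
- move=> p x; rewrite new_hub_mem => /or3P[/eqP->|/eqP->|/new_hub_old_mem pS] /=.
  + by move=> xA xH; case: (ps_uniq h1 hA hH xA xH) => AeH; move: AH; rewrite AeH eqxx.
  + by move=> xB xH; case: (ps_uniq h1 hB hH xB xH) => BeH; move: BH; rewrite BeH eqxx.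
  + exact: (ps_disj h1 pS).
- move=> x; have [p pS xp] := ps_cover h1 x.
  have [pA|pnA] := eqVneq p (A, set0).
    by exists (A, H); rewrite ?new_hub_mem ?eqxx //; move: xp; rewrite pA.
  have [pB|pnB] := eqVneq p (B, set0).
    by exists (B, H); rewrite ?new_hub_mem ?eqxx ?orbT //; move: xp; rewrite pB.
  by exists p => //; rewrite new_hub_mem pnA pnB pS !orbT.
- exact: new_hub_uniq.
- have hub_mem : (H, set0) \in new_hub.
    by rewrite new_hub_mem !xpair_eqE hH (eq_sym H A) (eq_sym H B) (negbTE AH) (negbTE BH).
  move=> p; rewrite new_hub_mem => /or3P[/eqP->|/eqP->|pold] //= p2.
  have pS := new_hub_old_mem pold.
  rewrite new_hub_mem (ps_hub h1 pS p2) !xpair_eqE.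
  by rewrite (negbTE (nA pS)) (negbTE (nB pS)) !orbT.
- exact: new_hub_twin.
Qed.

Lemma sps_le_new_hub : sps_le S1 new_hub.
Proof.
split.
- move=> p pS; have [->|pnA] := eqVneq p (A, set0).
    by exists (A, H); rewrite ?new_hub_mem ?eqxx // /sp_le /= setU0 subxx orbT.
  have [->|pnB] := eqVneq p (B, set0).
    by exists (B, H); rewrite ?new_hub_mem ?eqxx ?orbT // /sp_le /= setU0 subxx orbT.
  by exists p; [rewrite new_hub_mem pnA pnB pS !orbT | exact: sp_le_refl].
- move=> q; rewrite new_hub_mem => /or3P[/eqP->|/eqP->|qold] q2 [p pS pq].
  + by move: (nH pS); rewrite pq eqxx.
  + by move: (nH pS); rewrite pq eqxx.
  + by exists q; [exact: new_hub_old_mem | split=> //; exact: sp_le_refl].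
Qed.

Lemma Hof_new_hub : Hof new_hub = H |: Hof S1.
Proof.
apply/setP => G; rewrite inE; apply/HofP/orP => [[p]|[/set1P->|/HofP[p pS [p2 ->]]]].
- rewrite new_hub_mem => /or3P[/eqP->|/eqP->|pold] [p2 ->]; try by left; rewrite inE.
  by right; apply/HofP; exists p => //; exact: new_hub_old_mem.
- by exists (A, H); rewrite ?new_hub_mem ?eqxx //; split=> //; exact: H_neq0.
- by exists p => //; rewrite new_hub_mem new_hub_oldP ?orbT.
Qed.

Lemma card_new_hub : #|new_hub| = #|S1|.
Proof.
rewrite cardsU1 cardsU1 (cardsD1 (A, set0) S1) hA (cardsD1 (B, set0) (S1 :\ (A, set0))).
have -> : (B, set0) \in S1 :\ (A, set0).
  by rewrite !inE hB andbT xpair_eqE eq_sym (negbTE AB).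
have -> : (B, H) \notin S1 :\ (A, set0) :\ (B, set0).
  by rewrite !inE (negbTE (hubbed_notin hB)) !andbF.
have -> : (A, H) \notin (B, H) |: (S1 :\ (A, set0) :\ (B, set0)).
  by rewrite !inE (negbTE (hubbed_notin hA)) !andbF orbF xpair_eqE (negbTE AB).
by [].
Qed.

Lemma card_Hof_new_hub : #|Hof new_hub| = #|Hof S1|.+1.
Proof.
rewrite Hof_new_hub cardsU1.
suff -> : H \notin Hof S1 by [].
by apply/HofP => -[p pS [_ Hp]]; move: (nH pS); rewrite -Hp eqxx.
Qed.

Lemma pmh_new_hub : pmh new_hub = (pmh S1 - 1)%R.
Proof.
apply: (pmh_eq_sub1 h1 new_hub_polestar).
by rewrite card_new_hub card_Hof_new_hub addnS addnC.
Qed.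

Lemma new_hub_intermediate S2 : polestar_spec S2 -> sps_le S1 S2 ->
  (A, H) \in S2 -> (B, H) \in S2 -> intermediate S1 S2 new_hub.
Proof.
move=> h2 le12 AS BS.
split; [exact: new_hub_polestar | exact: sps_le_new_hub | split | exact: pmh_new_hub].
- move=> q; rewrite new_hub_mem => /or3P[/eqP->|/eqP->|qold].
  + by exists (A, H) => //; exact: sp_le_refl.
  + by exists (B, H) => //; exact: sp_le_refl.
  + exact: le12.1 q (new_hub_old_mem qold).
- move=> r rS r2 [q qS qr].
  have [rH|rnH] := eqVneq r.2 H.
    exists r; last by split=> //; exact: sp_le_refl.
    by case: (ps_twins_eq h2 AS BS AB H_neq0 rS rH) => ->; rewrite new_hub_mem eqxx ?orbT.
  have qold : old q.
    move: qS; rewrite new_hub_mem => /or3P[/eqP qE|/eqP qE|//];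
      by move: rnH; rewrite -qr qE eqxx.
  have [p pS [pr ple]] := le12.2 r rS r2 (ex_intro2 _ _ q (new_hub_old_mem qold) qr).
  by exists p => //; rewrite new_hub_mem new_hub_oldP ?orbT // pr.
Qed.

End NewHub.

Section Refine.
Variables S1 S2 : {set setpair T}.
Hypotheses (h1 : polestar_spec S1) (h2 : polestar_spec S2) (le12 : sps_le S1 S2).

Lemma intermediate_merge a b r0 : a \in S1 -> b \in S1 -> b.2 = set0 -> a != b ->
  (forall s, s \in S1 -> s.2 != a.1) -> (forall s, s \in S1 -> s.2 != b.1) ->
  r0 \in S2 -> a.1 \subset r0.1 -> b.1 \subset r0.1 -> (a.2 != set0 -> r0.2 = a.2) ->
  exists S3, intermediate S1 S2 S3.
Proof.
move=> aS bS b2 ab na nb r0S ar0 br0 r0a.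
have a1b1 : a.1 != b.1 by apply: contra_neq ab => e; exact: (ps_inj1 h1 aS bS e).
rewrite [a]surjective_pairing in aS; rewrite [b]surjective_pairing b2 in bS.
exists (merge_blocks S1 a.1 b.1 a.2).
by apply: (merge_intermediate h1 aS bS a1b1 na nb h2 le12 r0S) => //; rewrite subUset ar0.
Qed.

Lemma intermediate_collapse p r0 s : p \in S1 -> r0 \in S2 -> p.1 \subset r0.1 ->
  p.1 != r0.1 -> s \in S1 -> s.2 != set0 -> s.2 \subset r0.1 ->
  exists S3, intermediate S1 S2 S3.
Proof.
case: s => A H pS r0S pr0 pnr0 /= AS H0 Hr0.
have hH := ps_hub h1 AS H0.
have [[B H'] BS [BnA /= HH' _]] := ps_twin h1 AS H0; subst H'.
have AB : A != B by apply: contra_neq BnA => ->.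
have HnS2 : (H, set0) \notin S2.
  apply/negP => HS2; have r0H := ps_sub h2 HS2 r0S Hr0.
  have pH : p = (H, set0) by apply: (ps_sub h1 pS hH); rewrite r0H.
  by move: pnr0; rewrite pH -r0H eqxx.
have within C : (C, H) \in S1 -> C :|: H \subset r0.1.
  move=> CS; case: (sps_le_hubbed h1 h2 le12 CS H0) => [[r rS CHr] | [HS _]].
  - by rewrite -(ps_meet h2 rS r0S H0 (subset_trans (subsetUr C H) CHr) Hr0).
  - by rewrite HS in HnS2.
have ABHr0 : A :|: B :|: H \subset r0.1.
  by move: (within A AS) (within B BS); rewrite !subUset => /andP[-> ->] /andP[-> _].
exists (collapse S1 A B H).
exact: (collapse_intermediate h1 hH AS BS AB H0 le12 r0S ABHr0).
Qed.

Section NoHubWithin.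
Variable r0 : setpair T.
Hypotheses (r0S : r0 \in S2)
  (nohub : forall s, s \in S1 -> s.2 != set0 -> ~~ (s.2 \subset r0.1)).

Lemma within_not_hub t : t \in S1 -> t.1 \subset r0.1 -> forall s, s \in S1 -> s.2 != t.1.
Proof.
move=> tS tr0 s sS; apply/eqP => st.
by have := nohub sS; rewrite st tr0 (ps_neq0 h1 tS) => /(_ isT).
Qed.

Lemma within_hub t : t \in S1 -> t.1 \subset r0.1 -> t.2 != set0 -> r0.2 = t.2.
Proof.
move=> tS tr0 t2; case: (sps_le_hubbed h1 h2 le12 tS t2) => [[r rS tr] | [_ [r rS [rt tr]]]].
- have rr0 : r = r0.
    by apply: (ps_meet h2 rS r0S (ps_neq0 h1 tS) _ tr0); apply: subset_trans tr; apply: subsetUl.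
  by move: (nohub tS t2); rewrite -rr0 (subset_trans (subsetUr _ _) tr).
- by rewrite -(ps_meet h2 rS r0S (ps_neq0 h1 tS) tr tr0).
Qed.

(* Two hubbed blocks inside r0 would be twins, and then (SP2) forces the twin of r0
   in S2 to meet r0. *)
Lemma within_hubbed_other p z : p \in S1 -> z \in S1 -> p != z ->
  p.1 \subset r0.1 -> z.1 \subset r0.1 -> p.2 != set0 -> z.2 = set0.
Proof.
move=> pS zS pz pr0 zr0 p2; apply/eqP; apply: contraT => z2.
have r0p := within_hub pS pr0 p2; have r0z := within_hub zS zr0 z2.
have r02 : r0.2 != set0 by rewrite r0p.
have [r' r'S [r'r0 r'2 _]] := ps_twin h2 r0S r02.
have [s sS [sr' sr'1]] : exists2 s, s \in S1 & s.2 = r'.2 /\ s.1 \subset r'.1.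
  by apply: (sps_le_twins h1 h2 le12 r'S); rewrite r'2 //; exists p.
have [q _ [_ _ qu]] := ps_twin h1 pS p2.
have sr0 : s.1 \subset r0.1.
  case: (qu s sS (etrans sr' (etrans r'2 r0p))) => -> //.
  by case: (qu z zS (etrans (esym r0z) r0p)) => zE; [rewrite zE eqxx in pz | rewrite -zE].
by rewrite (ps_meet h2 r'S r0S (ps_neq0 h1 sS) sr'1 sr0) eqxx in r'r0.
Qed.

Lemma intermediate_within p z : p \in S1 -> z \in S1 -> p != z ->
  p.1 \subset r0.1 -> z.1 \subset r0.1 -> exists S3, intermediate S1 S2 S3.
Proof.
move=> pS zS pz pr0 zr0; have zp : z != p by rewrite eq_sym.
have [p2|p2] := eqVneq p.2 set0.
  apply: (intermediate_merge zS pS p2 zp (within_not_hub zS zr0) (within_not_hub pS pr0) r0S)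
    => //; exact: within_hub zS zr0.
have z2 := within_hubbed_other pS zS pz pr0 zr0 p2.
apply: (intermediate_merge pS zS z2 pz (within_not_hub pS pr0) (within_not_hub zS zr0) r0S)
  => //; exact: within_hub pS pr0.
Qed.

End NoHubWithin.

Lemma intermediate_proper p r0 : p \in S1 -> r0 \in S2 -> p.1 \subset r0.1 -> p.1 != r0.1 ->
  exists S3, intermediate S1 S2 S3.
Proof.
move=> pS r0S pr0 pnr0.
have [/exists_inP[s sS /andP[s2 sr0]] | nohub] :=
  boolP [exists s in S1, (s.2 != set0) && (s.2 \subset r0.1)].
  exact: (intermediate_collapse pS r0S pr0 pnr0 sS s2 sr0).
have {}nohub s : s \in S1 -> s.2 != set0 -> ~~ (s.2 \subset r0.1).
  by move=> sS s2; apply: contra nohub => sr0; apply/exists_inP; exists s; rewrite ?s2.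
have [x xr0 xnp] : exists2 x, x \in r0.1 & x \notin p.1.
  by apply/subsetPn; apply: contraNN pnr0 => r0p; rewrite eqEsubset pr0.
have [z zS xz] := ps_cover h1 x.
have zr0 : z.1 \subset r0.1.
  have [r rS zr] := sps_le_cover h1 h2 le12 zS.
  by rewrite -(ps_uniq h2 rS r0S (subsetP zr x xz) xr0).
have pz : p != z by apply: contraNneq xnp => ->.
exact: (intermediate_within r0S nohub pS zS pz pr0 zr0).
Qed.

Section SameBlocks.
Hypothesis blocks : forall p, p \in S1 -> p.1 \in Pof S2.

Lemma same_blocks r : r \in S2 -> exists2 p, p \in S1 & p.1 = r.1.
Proof.
move=> rS; have /set0Pn[x xr] := ps_neq0 h2 rS; have [p pS xp] := ps_cover h1 x.
have /imsetP[q qS pq] := blocks pS.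
exists p; rewrite // pq; congr fst.
by apply: (ps_uniq h2 qS rS _ xr); rewrite -pq.
Qed.

Lemma same_blocks_hub p r : p \in S1 -> r \in S2 -> p.1 = r.1 -> p.2 != set0 -> p.2 = r.2.
Proof.
move=> pS rS pr p2; case: (sps_le_hubbed h1 h2 le12 pS p2) => [[t tS pt] | [_ [t tS [tp pt]]]].
- have tr : t = r.
    apply: (ps_meet h2 tS rS (ps_neq0 h1 pS)); last by rewrite pr.
    by apply: subset_trans pt; apply: subsetUl.
  have /set0Pn[y yp] := p2; case: (ps_disj h1 pS _ yp).
  by rewrite pr -tr; apply: (subsetP pt); rewrite inE yp orbT.
- by rewrite -tp (ps_meet h2 tS rS (ps_neq0 h1 pS) pt) ?pr.
Qed.

Lemma same_blocks_unhubbed C h : (C, h) \in S2 -> h \notin Hof S1 -> (C, set0) \in S1.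
Proof.
move=> CS hS1; have [p pS pC] := same_blocks CS.
suff p2 : p.2 = set0 by rewrite -(pair_ext (q := (C, set0)) pC p2).
apply/eqP; apply: contraNT hS1 => p2; apply/HofP; exists p => //.
by split=> //; rewrite (same_blocks_hub pS CS pC p2).
Qed.

Lemma intermediate_new_hub r : r \in S2 -> r.2 != set0 -> r.2 \notin Hof S1 ->
  exists S3, intermediate S1 S2 S3.
Proof.
case: r => A H /= AS H0 HS1.
have [[B H'] BS [BnA /= HH' _]] := ps_twin h2 AS H0; subst H'.
have hA := same_blocks_unhubbed AS HS1; have hB := same_blocks_unhubbed BS HS1.
have hH : (H, set0) \in S1.
  apply: (same_blocks_unhubbed (ps_hub h2 AS H0)).
  by apply/HofP => -[p _ [p2 p20]]; rewrite -p20 eqxx in p2.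
have AB : A != B by apply: contra_neq BnA => ->.
have CH C : (C, H) \in S2 -> C != H.
  move=> CS; apply/eqP => CeH; have /set0Pn[y yC] := ps_neq0 h2 CS.
  by apply: (ps_disj h2 CS yC); rewrite /= -CeH.
have nH p : p \in S1 -> p.2 != H.
  move=> pS; apply/eqP => pH; move/negP: HS1; apply; apply/HofP.
  by exists p => //; rewrite pH.
exists (new_hub S1 A B H).
apply: (new_hub_intermediate h1 hH hA hB AB (CH A AS) (CH B BS) nH _ _ h2 le12 AS BS).
- exact: hubbed_block_not_hub AS H0.
- exact: hubbed_block_not_hub BS H0.
Qed.

Lemma same_blocks_eq : (forall r, r \in S2 -> r.2 != set0 -> r.2 \in Hof S1) -> S1 = S2.
Proof.
move=> hubs.
have sub12 : S1 \subset S2.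
  apply/subsetP => p pS; have /imsetP[s sS ps] := blocks pS.
  suff -> : p = s by [].
  apply: pair_ext => //; have [p2|p2] := eqVneq p.2 set0; last exact: same_blocks_hub.
  rewrite p2; apply/esym/eqP; apply: contraT => s2.
  have /HofP[q qS [_ sq]] := hubs s sS s2.
  have [t tS [ts tq]] := sps_le_twins h1 h2 le12 sS s2 (ex_intro2 _ _ q qS (esym sq)).
  have tp : t = p by apply: (ps_sub h1 tS pS); rewrite ps.
  by rewrite -ts tp p2 eqxx in s2.
apply/eqP; rewrite eqEsubset sub12; apply/subsetP => r rS.
have [p pS pr] := same_blocks rS.
by rewrite -(ps_inj1 h2 (subsetP sub12 p pS) rS pr).
Qed.

End SameBlocks.

Lemma intermediate_exists : S1 <> S2 -> exists S3, intermediate S1 S2 S3.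
Proof.
move=> S12.
have [/forall_inP blocks | /forall_inPn[p pS pnS2]] := boolP [forall p in S1, p.1 \in Pof S2].
- have [/exists_inP[r rS /andP[r2 rnS1]] | hubs] :=
    boolP [exists r in S2, (r.2 != set0) && (r.2 \notin Hof S1)].
    exact: intermediate_new_hub rS r2 rnS1.
  case: S12; apply: same_blocks_eq => // r rS r2.
  by apply: contraNT hubs => rnS1; apply/exists_inP; exists r; rewrite ?r2.
- have [r0 r0S pr0] := sps_le_cover h1 h2 le12 pS.
  apply: (intermediate_proper pS r0S pr0); apply: contraNneq pnS2 => ->.
  exact: imset_f.
Qed.

End Refine.

Lemma Hof_proper_Pof S : (0 < #|T|)%N -> polestar_spec S -> Hof S \proper Pof S.
Proof.
move=> T0 hS; have Hof_sub : Hof S \subset Pof S.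
  apply/subsetP => H /HofP[p pS [p2 ->]]; apply/imsetP.
  by exists (p.2, set0); first exact: (ps_hub hS pS p2).
rewrite properE Hof_sub /=; apply/subsetPn.
have [x _] : exists x : T, x \in [set: T] by apply/set0Pn; rewrite -cards_eq0 cardsT -lt0n.
have [p pS xp] := ps_cover hS x.
have [/HofP[s sS [s2 ps]] | pnH] := boolP (p.1 \in Hof S); last by exists p.1; rewrite ?imset_f.
exists s.1; first exact: imset_f.
apply/HofP => -[q qS [q2 sq]].
have s_hub : s = (q.2, set0) := ps_inj1 hS sS (ps_hub hS qS q2) sq.
by move: s2; rewrite s_hub eqxx.
Qed.

Lemma pmh_ge1 S : (0 < #|T|)%N -> polestar_spec S -> (1 <= pmh S)%R.
Proof.
move=> T0 hS; have := proper_card (Hof_proper_Pof T0 hS).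
by rewrite /pmh; move: #|Pof S| #|Hof S| => a b; lia.
Qed.

Lemma pmh_le_card S : polestar_spec S -> (pmh S <= #|T|%:Z)%R.
Proof.
move=> hS; have /polestarP[_ partS _ _] := hS.
have : (#|Pof S| <= #|T|)%N.
  rewrite -cardsT (card_partition partS) -sum1_card; apply: leq_sum => A AP.
  by rewrite card_gt0; apply: contraTneq AP => ->; case/and3P: partS.
by rewrite /pmh; move: #|Pof S| #|Hof S| => a b; lia.
Qed.

Lemma pmh_lt S1 S2 : (0 < #|T|)%N -> polestar_spec S1 -> polestar_spec S2 ->
  sps_lt S1 S2 -> (pmh S2 < pmh S1)%R.
Proof.
move=> T0 h1 h2 lt12; have := pmh_le_card h1; move: #|T| => n.
elim: n S1 h1 lt12 => [|n IH] S1 h1 [le12 S12] le_n.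
  by have := pmh_ge1 T0 h1; move: le_n; move: (pmh S1) => a; lia.
have [S3 [h3 _ le32 pmh3]] := intermediate_exists h1 h2 le12 S12.
have [<-|S32] := eqVneq S3 S2; first by rewrite pmh3; move: (pmh S1) => a; lia.
have := IH S3 h3 (conj le32 (elimN eqP S32)).
by rewrite pmh3; move: le_n; move: (pmh S1) (pmh S2) => a b; lia.
Qed.

End Polestars.

Unset Implicit Arguments.
Local Open Scope ring_scope.

Theorem mainTheorem7 (T : finType) (S1 S2 : {set setpair T}) :
  (0 < #|T|)%N -> polestar S1 -> polestar S2 -> sps_lt S1 S2 ->
  [/\ 1 <= pmh S2, pmh S2 < pmh S1, pmh S1 <= #|T|%:Z &
      (2 <= pmh S1 - pmh S2 ->
       exists S3 : {set setpair T},
         [/\ polestar S3, sps_lt S1 S3 & sps_lt S3 S2])].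
Proof.
move=> T0 /polestarP h1 /polestarP h2 lt12; have [le12 S12] := lt12.
split; [exact: pmh_ge1 | exact: pmh_lt | exact: pmh_le_card | move=> gap].
have [S3 [h3 le13 le32 pmh3]] := intermediate_exists h1 h2 le12 S12.
exists S3; split; first exact/polestarP.
- by split=> // S13; move: pmh3; rewrite -S13; move: (pmh S1) => a; lia.
- by split=> // S32; move: gap pmh3; rewrite S32; move: (pmh S1) (pmh S2) => a b; lia.
Qed.
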